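(* Let $f(z)=z+\sum_{k=2}^{\infty}a_kz^k$ be analytic in $\mathbb{D}=\{z:|z|<1\}$ with $zf'(z)-f(z)=\frac12 z^2\phi(z)$ for all $z\in\mathbb{D}$, where $\phi$ is analytic in $\mathbb{D}$ and $|\phi(z)|\le1$. Let $r_{\mathcal S^*}$ denote the positive root (in $(0,1)$) of \[3(1-r)(2-r)\ln(1-r)+4-4r-3r^2+2r^3=0.\] Then for every $n\ge2$ the partial sum $s_n(z;f)=z+\sum_{k=2}^n a_kz^k$ is starlike in the disk $|z|<r_{\mathcal S^*}$.
   Context: A normalized analytic function $g$ is starlike in a disk $|z|<\rho$ if it maps it conformally onto a domain starlike with respect to $0$; equivalently $\mathrm{Re}(zg'(z)/g(z))>0$ for $0<|z|<\rho$. *)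

From Stdlib Require Import Reals.
From Coquelicot Require Import Coquelicot.
Open Scope R_scope.

Definition in_disk (rho : R) (z : C) : Prop := Cmod z < rho.

(** g is analytic (complex differentiable) at every point of |z| < rho.
    [is_derive] on functions C -> C uses C as a normed module over itself,
    i.e. this is the complex derivative. *)
Definition holomorphic_on_disk (rho : R) (g : C -> C) : Prop :=
  forall z : C, in_disk rho z -> ex_derive g z.

Definition starlike_in_disk (rho : R) (g : C -> C) : Prop :=
  holomorphic_on_disk rho g /\
  forall z : C, 0 < Cmod z -> Cmod z < rho ->
    g z <> 0%C /\
    forall g' : C, is_derive g z g' -> 0 < Re (z * g' / g z)%C.

Definition partial_sum (a : nat -> C) (n : nat) (z : C) : C :=
  (z + sum_n_m (fun k => a k * pow_n z k) 2 n)%C.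

Definition rS_equation (r : R) : R :=
  3 * (1 - r) * (2 - r) * ln (1 - r) + 4 - 4 * r - 3 * r ^ 2 + 2 * r ^ 3.

(* Since [z f' - f = sum_k (k - 1) a_k z^k] is bounded by [1/2] on the disk, Cauchy's
   estimate gives [(k - 1) |a_k| <= 1/2]; it is obtained by averaging over the [N]-th
   roots of unity, which isolates one coefficient up to a tail vanishing as [N] grows.
   The partial sum [s = s_n(.; f)] inherits these bounds, so for [|z| = rho] both
   [|s(z) - z|] and [|z s'(z) - s(z)|] are at most [m = rho^2 / (2 (1 - rho))], whence
   [Re (z s'(z) / s(z)) >= 1 - m / (rho - m) > 0] as long as [rho < 1/2]. Finally
   [r_{S*} < 1/2]: a Taylor bound on [ln (1 - r)] makes the defining function negative
   on [[1/2, 1)]. *)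

From Stdlib Require Import Reals Lra Lia.
From Coquelicot Require Import Coquelicot.
Open Scope R_scope.

Ltac Cring :=
  match goal with |- @eq _ ?a ?b => change (@eq C a b) end;
  repeat change plus with Cplus; repeat change mult with Cmult; repeat change scal with Cmult;
  repeat change opp with Copp; repeat change one with (RtoC 1);
  repeat change (@pow_n (AbsRing.Ring C_AbsRing)) with (@pow_n C_Ring);
  repeat change zero with (RtoC 0); ring.

(** * Complex power series *)

Lemma Cmod_pow_n (z : C) (k : nat) : Cmod (pow_n z k) = Cmod z ^ k.
Proof.
  induction k as [|k IH]; [apply Cmod_1|].
  change (Cmod (z * pow_n z k)%C = Cmod z * Cmod z ^ k). now rewrite Cmod_mult, IH.
Qed.

Lemma Cmod_sum_n_le (d : nat -> C) (K : nat) :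
  Cmod (sum_n d K) <= sum_n (fun k => Cmod (d k)) K.
Proof. exact (norm_sum_n_m (K := C_AbsRing) d 0 K). Qed.

Lemma sum_n_le_series (c : nat -> R) (l : R) (K : nat) :
  (forall k, 0 <= c k) -> is_series c l -> sum_n c K <= l.
Proof.
  intros Hc Hl. apply (is_lim_seq_incr_compare (sum_n c)); [exact Hl|].
  intros k. rewrite sum_Sn. specialize (Hc (S k)). change plus with Rplus. lra.
Qed.

Lemma Cmod_series_le (d : nat -> C) (L : C) (B : R) :
  is_series d L -> (forall K, sum_n (fun k => Cmod (d k)) K <= B) -> Cmod L <= B.
Proof.
  intros HL HB.
  assert (Hlim : is_lim_seq (fun K => Cmod (sum_n d K)) (Cmod L)).
  { eapply filterlim_comp; [exact HL|].
    exact (filterlim_norm (K := C_AbsRing) (V := C_NormedModule) L). }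
  apply (is_lim_seq_le _ (fun _ => B) _ _ (fun K => Rle_trans _ _ _ (Cmod_sum_n_le d K) (HB K))
           Hlim (is_lim_seq_const B)).
Qed.

Lemma Cmod_series_le_geom (d : nat -> C) (L : C) (m q : R) :
  is_series d L -> 0 <= q < 1 -> (forall k, Cmod (d k) <= m * q ^ k) ->
  Cmod L <= m / (1 - q).
Proof.
  intros HL Hq Hd. apply (Cmod_series_le d L _ HL). intros K.
  assert (Hgeom : is_series (fun k => m * q ^ k) (m / (1 - q))).
  { apply (is_series_scal_l (K := R_AbsRing) (V := R_NormedModule) m (fun k => q ^ k)).
    apply is_series_geom. rewrite Rabs_pos_eq; lra. }
  apply Rle_trans with (sum_n (fun k => m * q ^ k) K).
  - apply sum_n_m_le. exact Hd.
  - apply (sum_n_le_series _ _ K); [|exact Hgeom].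
    intros k. apply Rle_trans with (Cmod (d k)); [apply Cmod_ge_0 | apply Hd].
Qed.

Lemma pseries_terms_bounded (a : nat -> C) (w l : C) :
  is_pseries a w l -> exists B, forall k, Cmod (a k) * Cmod w ^ k <= B.
Proof.
  intros Hl. set (ps := sum_n (fun k => scal (pow_n w k) (a k))).
  destruct (filterlim_bounded (K := C_AbsRing) ps) as [M HM]; [now exists l|].
  change (forall n, Cmod (ps n) <= M) in HM.
  exists (2 * M). intros k.
  rewrite <- Cmod_pow_n, <- Cmod_mult, Cmult_comm.
  destruct k as [|k].
  - specialize (HM 0%nat). unfold ps in HM. rewrite sum_O in HM.
    change (Cmod (pow_n w 0 * a 0%nat)%C <= M) in HM.
    pose proof (Cmod_ge_0 (pow_n w 0 * a 0%nat)%C). lra.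
  - assert (E : (pow_n w (S k) * a (S k))%C = (ps (S k) - ps k)%C).
    { unfold ps. rewrite sum_Sn. Cring. }
    rewrite E. eapply Rle_trans; [apply Cmod_triangle|]. rewrite Cmod_opp.
    pose proof (HM (S k)). pose proof (HM k). lra.
Qed.

Lemma CV_radius_Cmod_ge_1 (a : nat -> C) :
  (forall w, Cmod w < 1 -> ex_pseries a w) ->
  Rbar_le 1 (CV_radius (fun k => Cmod (a k))).
Proof.
  intros Ha.
  assert (Hin : forall x, 0 <= x < 1 -> Rbar_le x (CV_radius (fun k => Cmod (a k)))).
  { intros x Hx. apply (proj1 (CV_radius_bounded _)).
    assert (Hw : Cmod (RtoC x) < 1) by (rewrite Cmod_R, Rabs_pos_eq; lra).
    destruct (Ha _ Hw) as [l Hl].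
    destruct (pseries_terms_bounded a _ l Hl) as [B HB].
    exists B. intros k. specialize (HB k). rewrite Cmod_R, Rabs_pos_eq in HB by lra.
    rewrite Rabs_pos_eq; [exact HB|].
    apply Rmult_le_pos; [apply Cmod_ge_0 | apply pow_le; lra]. }
  pose proof (Hin 0 ltac:(lra)) as H0.
  destruct (CV_radius (fun k => Cmod (a k))) as [c| |]; simpl in *; [|exact I|exact H0].
  destruct (Rle_lt_dec 1 c) as [Hc|Hc]; [exact Hc|].
  pose proof (Hin ((1 + c) / 2) ltac:(lra)). simpl in *. lra.
Qed.

(** * Term-by-term differentiation *)

Definition PS_derive_C (a : nat -> C) (k : nat) : C := (RtoC (INR (S k)) * a (S k))%C.

Definition pow_n_taylor_rem (y z : C) (k : nat) : C :=
  (pow_n y (S k) - pow_n z (S k) - RtoC (INR (S k)) * pow_n z k * (y - z))%C.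

Lemma pow_n_taylor_rem_S (y z : C) (k : nat) :
  pow_n_taylor_rem y z (S k)
  = (y * pow_n_taylor_rem y z k + RtoC (INR (S k)) * pow_n z k * ((y - z) * (y - z)))%C.
Proof.
  unfold pow_n_taylor_rem.
  change (pow_n y (S (S k))) with (y * (y * pow_n y k))%C.
  change (pow_n z (S (S k))) with (z * (z * pow_n z k))%C.
  change (pow_n y (S k)) with (y * pow_n y k)%C.
  change (pow_n z (S k)) with (z * pow_n z k)%C.
  rewrite (S_INR (S k)), RtoC_plus. ring.
Qed.

Lemma Cmod_pow_n_taylor_rem_le (y z : C) (rho : R) (k : nat) :
  Cmod y <= rho -> Cmod z <= rho ->
  rho * Cmod (pow_n_taylor_rem y z k) <= INR k * INR (S k) * rho ^ k * Cmod (y - z) ^ 2.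
Proof.
  intros Hy Hz. pose proof (Cmod_ge_0 z).
  set (u := Cmod (y - z)). assert (Hu : 0 <= u) by apply Cmod_ge_0.
  induction k as [|k IH].
  - assert (E : pow_n_taylor_rem y z 0 = 0%C).
    { unfold pow_n_taylor_rem. simpl. Cring. }
    rewrite E, Cmod_0. simpl. lra.
  - rewrite pow_n_taylor_rem_S.
    assert (Htri : Cmod (y * pow_n_taylor_rem y z k
                         + RtoC (INR (S k)) * pow_n z k * ((y - z) * (y - z)))%C
                   <= rho * Cmod (pow_n_taylor_rem y z k) + INR (S k) * rho ^ k * (u * u)).
    { eapply Rle_trans; [apply Cmod_triangle|].
      rewrite !Cmod_mult, Cmod_R, Cmod_pow_n, Rabs_pos_eq by apply pos_INR.
      pose proof (Cmod_ge_0 (pow_n_taylor_rem y z k)).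
      assert (Cmod z ^ k <= rho ^ k) by (apply pow_incr; lra).
      assert (0 <= INR (S k) * (u * u)) by (apply Rmult_le_pos; [apply pos_INR | nra]).
      fold u. nra. }
    assert (Hrk : 0 <= rho ^ k * (u * u)) by (apply Rmult_le_pos; [apply pow_le|]; nra).
    assert (Hk : 0 <= INR k) by apply pos_INR.
    apply Rle_trans with (rho * (rho * Cmod (pow_n_taylor_rem y z k)
                                 + INR (S k) * rho ^ k * (u * u))).
    { apply Rmult_le_compat_l; lra. }
    apply Rle_trans with (rho * (INR k * INR (S k) * rho ^ k * u ^ 2)
                          + rho * (INR (S k) * rho ^ k * (u * u))).
    { rewrite Rmult_plus_distr_l. apply Rplus_le_compat_r. apply Rmult_le_compat_l; lra. }
    assert (0 <= rho * (rho ^ k * (u * u)) * (INR k + 1))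
      by (apply Rmult_le_pos; [apply Rmult_le_pos|]; lra).
    rewrite !S_INR. simpl. nra.
Qed.

Lemma is_derive_of_quadratic_remainder (F : C -> C) (z l : C) (delta K : R) :
  0 < delta ->
  (forall y, Cmod (y - z) < delta ->
     Cmod (F y - F z - (y - z) * l) <= K * Cmod (y - z) ^ 2) ->
  is_derive F z l.
Proof.
  intros Hdelta HK. split; [apply is_linear_scal_l|].
  intros z' Hz'.
  apply (is_filter_lim_locally_unique (K := C_AbsRing) (V := AbsRing_NormedModule C_AbsRing))
    in Hz'.
  subst z'.
  intros eps. pose proof (cond_pos eps).
  assert (Hd : 0 < Rmin delta (eps / (Rabs K + 1))).
  { apply Rmin_pos; [lra|]. apply Rdiv_lt_0_compat; [lra|]. pose proof (Rabs_pos K). lra. }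
  exists (mkposreal _ Hd). intros y Hy.
  change (Cmod (y - z) < Rmin delta (eps / (Rabs K + 1))) in Hy.
  pose proof (Rlt_le_trans _ _ _ Hy (Rmin_l _ _)) as Hy1.
  pose proof (Rlt_le_trans _ _ _ Hy (Rmin_r _ _)) as Hy2.
  eapply Rle_trans; [exact (HK y Hy1)|].
  pose proof (Cmod_ge_0 (y - z)). pose proof (Rle_abs K). pose proof (Rabs_pos K).
  assert (Cmod (y - z) * (Rabs K + 1) <= eps).
  { apply Rlt_le. apply (Rmult_lt_reg_r (/ (Rabs K + 1))). apply Rinv_0_lt_compat; lra.
    rewrite Rmult_assoc, Rinv_r by lra. lra. }
  change (norm (minus y z)) with (Cmod (y - z)).
  set (c := Cmod (y - z)) in *.
  apply Rle_trans with ((Rabs K + 1) * c * c); [simpl; nra|].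
  rewrite Rmult_comm, <- Rmult_assoc. apply Rmult_le_compat_r; lra.
Qed.

Lemma is_series_pseries_taylor_rem (a : nat -> C) (y z Fy Fz l : C) :
  is_pseries a y Fy -> is_pseries a z Fz -> is_pseries (PS_derive_C a) z l ->
  is_series (fun k => a (S k) * pow_n_taylor_rem y z k)%C (Fy - Fz - (y - z) * l)%C.
Proof.
  intros Hy Hz Hl.
  assert (Hyz : is_series (fun k => (pow_n y (S k) * a (S k) - pow_n z (S k) * a (S k))%C)
                          (Fy - Fz)%C).
  { apply (is_series_incr_1 (fun k => (pow_n y k * a k - pow_n z k * a k)%C)).
    replace (plus (Fy - Fz)%C _) with (minus Fy Fz)
      by (change (@eq C (Fy - Fz) (Fy - Fz + (1 * a 0%nat - 1 * a 0%nat)))%C; ring).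
    exact (is_series_minus _ _ _ _ Hy Hz). }
  eapply is_series_ext; [|exact (is_series_minus _ _ _ _ Hyz
                                  (is_series_scal (K := C_AbsRing) (y - z)%C _ _ Hl))].
  intros k. unfold pow_n_taylor_rem, PS_derive_C. Cring.
Qed.

Lemma Cmod_pseries_taylor_rem_le (a : nat -> C) (y z Fy Fz l : C) (rho M : R) :
  is_pseries a y Fy -> is_pseries a z Fz -> is_pseries (PS_derive_C a) z l ->
  0 < rho -> Cmod y <= rho -> Cmod z <= rho ->
  is_series (fun k => INR k * INR (S k) * Cmod (a (S k)) * rho ^ k) M ->
  rho * Cmod (Fy - Fz - (y - z) * l) <= M * Cmod (y - z) ^ 2.
Proof.
  intros Hy Hz Hl Hrho Hyr Hzr HM.
  pose proof (is_series_pseries_taylor_rem a y z Fy Fz l Hy Hz Hl) as Hdiff.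
  set (u2 := Cmod (y - z) ^ 2).
  assert (Hu2 : 0 <= u2) by (apply pow_le, Cmod_ge_0).
  set (D := fun k => INR k * INR (S k) * Cmod (a (S k)) * rho ^ k) in HM.
  assert (HD : forall k, 0 <= D k).
  { intros k. apply Rmult_le_pos; [|apply pow_le; lra].
    apply Rmult_le_pos; [apply Rmult_le_pos; apply pos_INR | apply Cmod_ge_0]. }
  enough (Cmod (Fy - Fz - (y - z) * l)%C <= u2 / rho * M) as H.
  { apply (Rmult_le_compat_l rho) in H; [|lra].
    replace (rho * (u2 / rho * M)) with (M * u2) in H by (field; lra). exact H. }
  apply (Cmod_series_le _ _ _ Hdiff). intros K.
  apply Rle_trans with (sum_n (fun k => u2 / rho * D k) K).
  - apply sum_n_m_le. intros k. rewrite Cmod_mult.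
    pose proof (Cmod_pow_n_taylor_rem_le y z rho k Hyr Hzr) as Hrem.
    pose proof (Cmod_ge_0 (a (S k))).
    replace (u2 / rho * D k)
      with (Cmod (a (S k)) * ((INR k * INR (S k) * rho ^ k * u2) / rho)) by (unfold D; field; lra).
    apply Rmult_le_compat_l; [lra|].
    apply (Rmult_le_reg_l rho); [lra|].
    replace (rho * (INR k * INR (S k) * rho ^ k * u2 / rho))
      with (INR k * INR (S k) * rho ^ k * u2) by (field; lra).
    exact Hrem.
  - apply sum_n_le_series.
    + intros k. apply Rmult_le_pos; [apply Rdiv_le_0_compat; lra | apply HD].
    + exact (is_series_scal_l (K := R_AbsRing) (V := R_NormedModule) _ _ _ HM).
Qed.

Lemma CV_disk_of_CV_radius_Cmod (a : nat -> C) (c : nat -> R) (x : R) :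
  (forall w, Cmod w < 1 -> ex_pseries a w) ->
  CV_radius c = CV_radius (fun k => Cmod (a k)) -> 0 <= x < 1 ->
  ex_series (fun k => Rabs (c k * x ^ k)).
Proof.
  intros Ha Hc Hx. apply CV_disk_inside. rewrite Hc, Rabs_pos_eq by lra.
  eapply Rbar_lt_le_trans; [|exact (CV_radius_Cmod_ge_1 a Ha)]. simpl. lra.
Qed.

Lemma ex_pseries_PS_derive_C (a : nat -> C) (z : C) :
  (forall w, Cmod w < 1 -> ex_pseries a w) -> Cmod z < 1 -> ex_pseries (PS_derive_C a) z.
Proof.
  intros Ha Hz.
  apply (ex_series_le (K := C_AbsRing) (V := C_CompleteNormedModule)
           _ (fun k => Rabs (PS_derive (fun k => Cmod (a k)) k * Cmod z ^ k))).
  - intros k. eapply Rle_trans; [|apply Rle_abs]. apply Req_le.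
    change (Cmod (pow_n z k * (RtoC (INR (S k)) * a (S k)))%C
            = INR (S k) * Cmod (a (S k)) * Cmod z ^ k).
    rewrite !Cmod_mult, Cmod_pow_n, Cmod_R, Rabs_pos_eq by apply pos_INR. ring.
  - apply (CV_disk_of_CV_radius_Cmod a); [exact Ha | apply CV_radius_derive |].
    split; [apply Cmod_ge_0 | exact Hz].
Qed.

Lemma is_derive_pseries_C (a : nat -> C) (F : C -> C) :
  (forall w, Cmod w < 1 -> is_pseries a w (F w)) ->
  forall z, Cmod z < 1 -> exists l, is_pseries (PS_derive_C a) z l /\ is_derive F z l.
Proof.
  intros HF z Hz. pose proof (Cmod_ge_0 z) as Hz0.
  assert (Ha : forall w, Cmod w < 1 -> ex_pseries a w) by (intros w Hw; eexists; exact (HF w Hw)).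
  set (abs_a := fun k => Cmod (a k)).
  destruct (ex_pseries_PS_derive_C a z Ha Hz) as [l Hl].
  exists l. split; [exact Hl|].
  set (rho := (1 + Cmod z) / 2).
  (* [D k = k (k + 1) |a (k + 1)|] bounds the Taylor remainders; as a shifted second
     derivative of [abs_a] it has the same radius of convergence *)
  set (D := PS_incr_1 (PS_derive (PS_derive abs_a))).
  assert (HD : ex_series (fun k => Rabs (D k * rho ^ k))).
  { apply (CV_disk_of_CV_radius_Cmod a); [exact Ha | | unfold rho; lra].
    unfold D. now rewrite CV_radius_incr_1, !CV_radius_derive. }
  assert (HDeq : forall k, Rabs (D k * rho ^ k) = INR k * INR (S k) * abs_a (S k) * rho ^ k).
  { intros k. unfold D, PS_incr_1, PS_derive. rewrite Rabs_pos_eq.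
    - destruct k as [|k]; [change zero with 0; rewrite INR_0|]; ring.
    - destruct k as [|k]; [change zero with 0; lra|].
      apply Rmult_le_pos; [apply Rmult_le_pos; [apply pos_INR|] | apply pow_le; unfold rho; lra].
      apply Rmult_le_pos; [apply pos_INR | apply Cmod_ge_0]. }
  set (K := Series (fun k => Rabs (D k * rho ^ k))).
  apply (is_derive_of_quadratic_remainder F z l (rho - Cmod z) (K / rho)); [unfold rho; lra|].
  intros y Hy.
  assert (Hyr : Cmod y <= rho).
  { replace y with (z + (y - z))%C by ring. pose proof (Cmod_triangle z (y - z)). lra. }
  pose proof (Cmod_pseries_taylor_rem_le a y z (F y) (F z) l rho K
                (HF y ltac:(unfold rho in *; lra)) (HF z Hz) Hl ltac:(unfold rho; lra)
                Hyr ltac:(unfold rho; lra)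
                (is_series_ext _ _ _ HDeq (Series_correct _ HD))) as Hrem.
  apply (Rmult_le_reg_l rho); [unfold rho; lra|].
  replace (rho * (K / rho * Cmod (y - z) ^ 2)) with (K * Cmod (y - z) ^ 2)
    by (field; unfold rho; lra).
  exact Hrem.
Qed.

(** * Cauchy's coefficient estimate *)

Lemma pow_n_Cmult (x y : C) (k : nat) : pow_n (x * y)%C k = (pow_n x k * pow_n y k)%C.
Proof.
  induction k as [|k IH].
  - change (@eq C 1 (1 * 1))%C. ring.
  - change (@eq C ((x * y) * pow_n (x * y) k) ((x * pow_n x k) * (y * pow_n y k)))%C.
    rewrite IH. ring.
Qed.

Lemma pow_n_pow_n (x : C) (m n : nat) : pow_n (pow_n x m) n = pow_n x (m * n).
Proof.
  induction n as [|n IH]; [now rewrite Nat.mul_0_r|].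
  replace (m * S n)%nat with (m + m * n)%nat by lia. now rewrite pow_n_plus, <- IH.
Qed.

Lemma pow_n_RtoC (x : R) (k : nat) : pow_n (RtoC x) k = RtoC (x ^ k).
Proof.
  induction k as [|k IH]; [reflexivity|].
  change (RtoC x * pow_n (RtoC x) k = RtoC (x * x ^ k))%C. now rewrite IH, RtoC_mult.
Qed.

Lemma sum_n_pow_n_geom (w : C) (n : nat) :
  ((w - 1) * sum_n (pow_n w) n = pow_n w (S n) - 1)%C.
Proof.
  induction n as [|n IH].
  - rewrite sum_O. change (@eq C ((w - 1) * 1) (w * 1 - 1))%C. ring.
  - rewrite sum_Sn. change plus with Cplus.
    change (pow_n w (S (S n))) with (w * pow_n w (S n))%C.
    rewrite Cmult_plus_distr_l, IH. ring.
Qed.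

Lemma sum_n_pow_n_eq_0 (w : C) (N : nat) :
  (1 <= N)%nat -> pow_n w N = RtoC 1 -> w <> RtoC 1 -> sum_n (pow_n w) (N - 1) = RtoC 0.
Proof.
  intros HN HwN Hw1. pose proof (sum_n_pow_n_geom w (N - 1)) as Hgeom.
  replace (S (N - 1)) with N in Hgeom by lia. rewrite HwN in Hgeom.
  assert (Hw : (w - 1)%C <> RtoC 0) by (apply Cminus_eq_contra; exact Hw1).
  replace (sum_n (pow_n w) (N - 1)) with (/ (w - 1) * ((w - 1) * sum_n (pow_n w) (N - 1)))%C
    by (field; exact Hw).
  rewrite Hgeom. Cring.
Qed.

Lemma sum_n_single (d : nat -> C) (j K : nat) :
  (j <= K)%nat -> (forall k, (k <= K)%nat -> k <> j -> d k = RtoC 0) -> sum_n d K = d j.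
Proof.
  intros HjK Hd.
  assert (Hbelow : forall K', (K' < j)%nat -> sum_n d K' = RtoC 0).
  { induction K' as [|K' IH]; intros HK'.
    - rewrite sum_O. apply Hd; lia.
    - rewrite sum_Sn, IH, Hd by lia. Cring. }
  assert (Habove : forall K', (j <= K' <= K)%nat -> sum_n d K' = d j).
  { induction K' as [|K' IH]; intros HK'.
    - assert (j = 0%nat) as -> by lia. apply sum_O.
    - destruct (Nat.eq_dec j (S K')) as [->|Hne].
      + rewrite sum_Sn, Hbelow by lia. Cring.
      + rewrite sum_Sn, IH, (Hd (S K')) by lia. Cring. }
  apply Habove. lia.
Qed.

Definition root_of_unity (N : nat) : C := (cos (2 * PI / INR N), sin (2 * PI / INR N)).

Lemma pow_n_root_of_unity (N m : nat) :
  pow_n (root_of_unity N) m = (cos (INR m * (2 * PI / INR N)), sin (INR m * (2 * PI / INR N))).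
Proof.
  induction m as [|m IH].
  - simpl. rewrite Rmult_0_l, cos_0, sin_0. reflexivity.
  - change (pow_n (root_of_unity N) (S m)) with (root_of_unity N * pow_n (root_of_unity N) m)%C.
    rewrite IH, S_INR. unfold root_of_unity. set (t := 2 * PI / INR N).
    replace ((INR m + 1) * t) with (t + INR m * t) by ring.
    rewrite cos_plus, sin_plus. unfold Cmult. simpl. f_equal; ring.
Qed.

Lemma Cmod_pow_n_root_of_unity (N m : nat) : Cmod (pow_n (root_of_unity N) m) = 1.
Proof.
  rewrite pow_n_root_of_unity. unfold Cmod. simpl. rewrite !Rmult_1_r, Rplus_comm.
  rewrite <- (Rsqr_def (cos _)), <- (Rsqr_def (sin _)), sin2_cos2. apply sqrt_1.
Qed.

Lemma pow_n_root_of_unity_N (N : nat) : (1 <= N)%nat -> pow_n (root_of_unity N) N = RtoC 1.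
Proof.
  intros HN. rewrite pow_n_root_of_unity.
  assert (0 < INR N) by (apply lt_0_INR; lia).
  replace (INR N * (2 * PI / INR N)) with (2 * PI) by (field; lra).
  rewrite cos_2PI, sin_2PI. reflexivity.
Qed.

Lemma pow_n_root_of_unity_neq_1 (N e : nat) :
  (0 < e < 2 * N)%nat -> e <> N -> pow_n (root_of_unity N) e <> RtoC 1.
Proof.
  intros He HeN Heq. rewrite pow_n_root_of_unity in Heq. injection Heq as Hcos Hsin.
  assert (HN : 0 < INR N) by (apply lt_0_INR; lia).
  pose proof PI_RGT_0.
  destruct (sin_eq_0_0 _ Hsin) as [k Hk].
  (* the angle is [k * PI] with [0 < k < 4]; [k] odd gives cosine [-1], [k = 2] gives [e = N] *)
  assert (Hk2 : IZR k * INR N = 2 * INR e).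
  { apply (Rmult_eq_reg_r (PI / INR N)); [|apply Rgt_not_eq, Rdiv_lt_0_compat; lra].
    replace (IZR k * INR N * (PI / INR N)) with (IZR k * PI) by (field; lra).
    rewrite <- Hk. field. lra. }
  assert (He1 : 0 < INR e) by (apply lt_0_INR; lia).
  assert (He2 : INR e < 2 * INR N).
  { replace 2 with (INR 2) by reflexivity. rewrite <- mult_INR. apply lt_INR. lia. }
  assert (Hk0 : (0 < k)%Z) by (apply lt_IZR; nra).
  assert (Hk4 : (k < 4)%Z) by (apply lt_IZR; nra).
  assert (k = 1 \/ k = 2 \/ k = 3)%Z as [-> | [-> | ->]] by lia.
  - rewrite Hk, Rmult_1_l, cos_PI in Hcos. lra.
  - apply HeN, INR_eq. simpl in Hk2. lra.
  - rewrite Hk in Hcos. replace (IZR 3 * PI) with (PI + 2 * INR 1 * PI) in Hcos by (simpl; ring).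
    rewrite cos_period, cos_PI in Hcos. lra.
Qed.

Lemma is_series_sum_n (f : nat -> nat -> C) (L : nat -> C) (M : nat) :
  (forall m, is_series (f m) (L m)) ->
  is_series (fun k => sum_n (fun m => f m k) M) (sum_n L M).
Proof.
  intros H. induction M as [|M IH].
  - rewrite sum_O. eapply is_series_ext; [|apply (H 0%nat)]. intros k. now rewrite sum_O.
  - rewrite sum_Sn. eapply is_series_ext; [|apply (is_series_plus _ _ _ _ IH (H (S M)))].
    intros k. now rewrite sum_Sn.
Qed.

Lemma sum_n_RtoC_1 (n : nat) : sum_n (fun _ => RtoC 1) n = RtoC (INR (S n)).
Proof.
  induction n as [|n IH]; [apply sum_O|].
  rewrite sum_Sn, IH, (S_INR (S n)), RtoC_plus. reflexivity.
Qed.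

Lemma pow_1_minus_ge (h : R) (n : nat) : 0 <= h <= 1 -> 1 - INR n * h <= (1 - h) ^ n.
Proof.
  intros Hh. induction n as [|n IH]; [simpl; lra|].
  rewrite S_INR. simpl.
  assert (0 <= INR n * h * h) by (apply Rmult_le_pos; [apply Rmult_le_pos; [apply pos_INR|]|]; lra).
  assert ((1 - h) * (1 - INR n * h) <= (1 - h) * (1 - h) ^ n) by (apply Rmult_le_compat_l; lra).
  nra.
Qed.

(* [unity_average N j rho g] is [(1/N) sum_(m < N) w^(-m j) g (rho w^m)] for
   [w = root_of_unity N], with [w^(m (N - j))] standing for [w^(-m j)]. *)
Definition unity_average (N j : nat) (rho : R) (g : C -> C) : C :=
  sum_n (fun m => RtoC (/ INR N) * pow_n (pow_n (root_of_unity N) m) (N - j)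
                  * g (RtoC rho * pow_n (root_of_unity N) m))%C (N - 1).

Lemma Cmod_unity_average_le (N j : nat) (rho M : R) (g : C -> C) :
  (1 <= N)%nat -> 0 <= rho -> (forall w, Cmod w = rho -> Cmod (g w) <= M) ->
  Cmod (unity_average N j rho g) <= M.
Proof.
  intros HN Hrho Hg. assert (HNpos : 0 < INR N) by (apply lt_0_INR; lia).
  eapply Rle_trans; [apply Cmod_sum_n_le|].
  apply Rle_trans with (sum_n (fun _ => / INR N * M) (N - 1)).
  - apply sum_n_m_le. intros m.
    rewrite !Cmod_mult, pow_n_pow_n, Cmod_pow_n_root_of_unity, Cmod_R, Rabs_pos_eq, Rmult_1_r
      by (apply Rlt_le, Rinv_0_lt_compat; lra).
    apply Rmult_le_compat_l; [apply Rlt_le, Rinv_0_lt_compat; lra|].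
    apply Hg. rewrite Cmod_mult, Cmod_pow_n_root_of_unity, Cmod_R, Rabs_pos_eq; lra.
  - rewrite sum_n_const. replace (S (N - 1)) with N by lia. apply Req_le. field. lra.
Qed.

Lemma unity_average_pow_n (N j k : nat) (rho : R) : (j <= N)%nat ->
  unity_average N j rho (fun w => pow_n w k)
  = (RtoC (/ INR N * rho ^ k) * sum_n (pow_n (pow_n (root_of_unity N) (k + N - j))) (N - 1))%C.
Proof.
  intros HjN. unfold unity_average. rewrite <- (sum_n_mult_l (K := C_Ring)).
  apply sum_n_ext. intros m.
  rewrite pow_n_Cmult, pow_n_RtoC, RtoC_mult, !pow_n_pow_n.
  replace ((k + N - j) * m)%nat with (m * k + m * (N - j))%nat by nia.
  rewrite pow_n_plus, <- !pow_n_pow_n. Cring.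
Qed.

Lemma unity_average_pow_n_diag (N j : nat) (rho : R) : (j < N)%nat ->
  unity_average N j rho (fun w => pow_n w j) = RtoC (rho ^ j).
Proof.
  intros HjN. assert (HNpos : 0 < INR N) by (apply lt_0_INR; lia).
  rewrite unity_average_pow_n by lia. replace (j + N - j)%nat with N by lia.
  rewrite pow_n_root_of_unity_N by lia.
  rewrite (sum_n_ext _ (fun _ => RtoC 1)) by (intros m; now rewrite pow_n_RtoC, pow1).
  rewrite sum_n_RtoC_1. replace (S (N - 1)) with N by lia.
  rewrite <- RtoC_mult. f_equal. field. lra.
Qed.

Lemma unity_average_pow_n_off_diag (N j k : nat) (rho : R) :
  (j < N)%nat -> (k < N)%nat -> k <> j -> unity_average N j rho (fun w => pow_n w k) = RtoC 0.
Proof.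
  intros HjN HkN Hkj.
  rewrite unity_average_pow_n by lia.
  rewrite (sum_n_pow_n_eq_0 _ N); [Cring | lia | |].
  - rewrite pow_n_pow_n, Nat.mul_comm, <- pow_n_pow_n, pow_n_root_of_unity_N by lia.
    now rewrite pow_n_RtoC, pow1.
  - apply pow_n_root_of_unity_neq_1; lia.
Qed.

Lemma Cmod_unity_average_pow_n_le (N j k : nat) (rho : R) :
  (j <= N)%nat -> (1 <= N)%nat -> 0 <= rho ->
  Cmod (unity_average N j rho (fun w => pow_n w k)) <= rho ^ k.
Proof.
  intros HjN HN Hrho.
  apply Cmod_unity_average_le; [exact HN | exact Hrho|].
  intros w Hw. rewrite Cmod_pow_n, Hw. lra.
Qed.

Lemma is_series_unity_average (b : nat -> C) (G : C -> C) (N j : nat) (rho : R) :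
  0 <= rho -> (forall w, Cmod w = rho -> is_pseries b w (G w)) ->
  is_series (fun k => unity_average N j rho (fun w => pow_n w k) * b k)%C
            (unity_average N j rho G).
Proof.
  intros Hrho HG. unfold unity_average.
  assert (Hcircle : forall m, Cmod (RtoC rho * pow_n (root_of_unity N) m)%C = rho).
  { intros m. rewrite Cmod_mult, Cmod_pow_n_root_of_unity, Cmod_R, Rabs_pos_eq; lra. }
  eapply is_series_ext; [|apply is_series_sum_n; intros m;
    exact (is_series_scal (K := C_AbsRing) (V := C_NormedModule)
             (RtoC (/ INR N) * pow_n (pow_n (root_of_unity N) m) (N - j))%C _ _
             (HG _ (Hcircle m)))].
  intros k. rewrite <- (sum_n_mult_r (K := C_Ring)). apply sum_n_ext. intros m. Cring.
Qed.

(* Of the three factors [t ^ n], one is absorbed by [B] and one yields [t ^ N]. *)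
Lemma pow_3_mul_le_geom (t B c : R) (N k : nat) :
  0 < t < 1 -> 0 <= c -> t ^ (N + k) * c <= B -> (t ^ 3) ^ (N + k) * c <= B * t ^ N * t ^ k.
Proof.
  intros Ht Hc HB.
  assert (Hpow : (t ^ 3) ^ (N + k) = t ^ N * t ^ k * t ^ (N + k) * t ^ (N + k)).
  { rewrite <- pow_mult, <- pow_add.
    replace (3 * (N + k))%nat with (N + k + (N + k) + (N + k))%nat by lia.
    now rewrite !pow_add. }
  rewrite Hpow.
  assert (Htk1 : t ^ (N + k) <= 1) by (rewrite <- (pow1 (N + k)); apply pow_incr; lra).
  assert (Htk0 : 0 <= t ^ (N + k)) by (apply pow_le; lra).
  assert (0 <= t ^ N * t ^ k) by (rewrite <- pow_add; exact Htk0).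
  assert (t ^ (N + k) * (t ^ (N + k) * c) <= 1 * B) by (apply Rmult_le_compat; nra).
  replace (t ^ N * t ^ k * t ^ (N + k) * t ^ (N + k) * c)
    with (t ^ N * t ^ k * (t ^ (N + k) * (t ^ (N + k) * c))) by ring.
  replace (B * t ^ N * t ^ k) with (t ^ N * t ^ k * (1 * B)) by ring.
  apply Rmult_le_compat_l; lra.
Qed.

Section CoefficientAverage.

Variables (b : nat -> C) (G : C -> C) (M : R).
Hypothesis HG : forall w, Cmod w < 1 -> is_pseries b w (G w).
Hypothesis HM : forall w, Cmod w < 1 -> Cmod (G w) <= M.

Lemma pseries_coef_average_le (j N : nat) (t B : R) :
  0 < t < 1 -> (forall k, Cmod (b k) * t ^ k <= B) -> (j < N)%nat ->
  (t ^ 3) ^ j * Cmod (b j) <= M + B * t ^ N / (1 - t).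
Proof.
  intros Ht HB HjN.
  set (rho := t ^ 3). assert (Hrho : 0 < rho < 1).
  { split; [apply pow_lt; lra | apply pow_lt_1_compat; [lra | lia]]. }
  set (A := unity_average N j rho G).
  set (T := fun k => (unity_average N j rho (fun w => pow_n w k) * b k)%C).
  assert (HT : is_series T A).
  { apply is_series_unity_average; [lra|]. intros w Hw. apply HG. lra. }
  assert (HA : Cmod A <= M).
  { apply Cmod_unity_average_le; [lia | lra |]. intros w Hw. apply HM. lra. }
  assert (HTj : T j = (RtoC (rho ^ j) * b j)%C).
  { unfold T. now rewrite unity_average_pow_n_diag. }
  (* [T k] vanishes for [k < N], [k <> j], so [A - T j] is a tail of the series *)
  assert (Htail : is_series (fun k => T (N + k)%nat) (A - T j)%C).
  { apply is_series_incr_n; [lia|].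
    rewrite (sum_n_single T j); [| lia |].
    - match goal with |- is_series _ ?L => replace L with A; [exact HT|] end.
      symmetry. change (@eq C (A - T j + T j)%C A). ring.
    - intros k Hk Hkj. unfold T. rewrite unity_average_pow_n_off_diag by lia. Cring. }
  assert (Hrest : Cmod (A - T j)%C <= B * t ^ N / (1 - t)).
  { apply (Cmod_series_le_geom _ _ _ _ Htail); [lra|]. intros k.
    unfold T. rewrite Cmod_mult.
    eapply Rle_trans.
    { apply Rmult_le_compat_r; [apply Cmod_ge_0|].
      apply Cmod_unity_average_pow_n_le; lia || lra. }
    apply pow_3_mul_le_geom; [lra | apply Cmod_ge_0 | rewrite Rmult_comm; apply HB]. }
  rewrite <- (Rabs_pos_eq (rho ^ j)) by (apply pow_le; lra).
  rewrite <- Cmod_R, <- Cmod_mult, <- HTj.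
  replace (T j) with (A - (A - T j))%C by Cring.
  eapply Rle_trans; [apply Cmod_triangle|]. rewrite Cmod_opp. lra.
Qed.

Lemma pseries_coef_le_radius (j : nat) (t : R) : 0 < t < 1 -> (t ^ 3) ^ j * Cmod (b j) <= M.
Proof.
  intros Ht.
  assert (Ht1 : Cmod (RtoC t) < 1) by (rewrite Cmod_R, Rabs_pos_eq; lra).
  destruct (pseries_terms_bounded b _ _ (HG _ Ht1)) as [B HB].
  rewrite Cmod_R, Rabs_pos_eq in HB by lra.
  assert (HB0 : 0 <= B).
  { specialize (HB 0%nat). pose proof (Cmod_ge_0 (b 0%nat)). simpl in HB. lra. }
  apply Rle_plus_epsilon. intros eps Heps.
  assert (Hy : 0 < eps * (1 - t) / (B + 1)) by (apply Rdiv_lt_0_compat; nra).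
  destruct (pow_lt_1_zero t ltac:(rewrite Rabs_pos_eq; lra) _ Hy) as [N0 HN0].
  set (N := Nat.max N0 (S j)).
  specialize (HN0 N ltac:(unfold N; lia)). rewrite Rabs_pos_eq in HN0 by (apply pow_le; lra).
  eapply Rle_trans; [apply (pseries_coef_average_le j N t B); [lra | exact HB | unfold N; lia]|].
  apply Rplus_le_compat_l.
  apply (Rmult_le_reg_r (1 - t)); [lra|].
  replace (B * t ^ N / (1 - t) * (1 - t)) with (B * t ^ N) by (field; lra).
  apply Rle_trans with (B * (eps * (1 - t) / (B + 1))); [apply Rmult_le_compat_l; lra|].
  apply (Rmult_le_reg_r (B + 1)); [lra|].
  replace (B * (eps * (1 - t) / (B + 1)) * (B + 1)) with (B * (eps * (1 - t))) by (field; lra).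
  nra.
Qed.

Lemma Cmod_pseries_coef_le (j : nat) : Cmod (b j) <= M.
Proof.
  apply Rle_plus_epsilon. intros eps Heps.
  set (c := Cmod (b j)). set (n := (3 * j)%nat).
  assert (Hc : 0 <= c) by apply Cmod_ge_0.
  assert (Hn : 0 <= INR n) by apply pos_INR.
  set (h := eps / (INR n * c + eps + 1)).
  assert (Hh : 0 < h < 1).
  { unfold h. split; [apply Rdiv_lt_0_compat; nra|].
    apply (Rmult_lt_reg_r (INR n * c + eps + 1)); [nra|].
    field_simplify; nra. }
  assert (Hnh : INR n * h * c <= eps).
  { unfold h. apply (Rmult_le_reg_r (INR n * c + eps + 1)); [nra|].
    field_simplify; nra. }
  pose proof (pseries_coef_le_radius j (1 - h) ltac:(lra)) as Hr.
  rewrite <- pow_mult in Hr. fold n c in Hr.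
  pose proof (pow_1_minus_ge h n ltac:(lra)).
  assert (c * (1 - (1 - h) ^ n) <= c * (INR n * h)) by (apply Rmult_le_compat_l; lra).
  nra.
Qed.

End CoefficientAverage.

Lemma is_pseries_z_mul_PS_derive_C (a : nat -> C) (z l : C) :
  is_pseries (PS_derive_C a) z l -> is_pseries (fun k => RtoC (INR k) * a k)%C z (z * l)%C.
Proof.
  intros Hl. apply (is_series_decr_1 (K := C_AbsRing) (V := C_NormedModule)).
  match goal with |- is_series _ ?L => replace L with (scal z l) end.
  - eapply is_series_ext; [|exact (is_series_scal (K := C_AbsRing) z _ _ Hl)].
    intros k. unfold PS_derive_C.
    change (@eq C (z * (pow_n z k * (INR (S k) * a (S k))))
                  ((z * pow_n z k) * (INR (S k) * a (S k))))%C.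
    ring.
  - change (@eq C (z * l) (z * l + - (1 * (RtoC (INR 0) * a 0%nat))))%C.
    rewrite INR_0. ring.
Qed.

Lemma Cmod_pseries_coef_le_of_z_derive_sub (a : nat -> C) (f f' : C -> C) (M : R) :
  (forall z, Cmod z < 1 -> is_pseries a z (f z)) ->
  (forall z, Cmod z < 1 -> is_derive f z (f' z)) ->
  (forall z, Cmod z < 1 -> Cmod (z * f' z - f z)%C <= M) ->
  forall k, INR k * Cmod (a (S k)) <= M.
Proof.
  intros Hf Hf' HM k.
  set (b := fun k => (RtoC (INR k) * a k - a k)%C).
  assert (Hb : forall z, Cmod z < 1 -> is_pseries b z (z * f' z - f z)%C).
  { intros z Hz. destruct (is_derive_pseries_C a f Hf z Hz) as [l [Hl Hd]].
    replace (f' z) with l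
      by (now rewrite <- (is_C_derive_unique _ _ _ (Hf' z Hz)), (is_C_derive_unique _ _ _ Hd)).
    eapply is_series_ext;
      [|exact (is_series_minus _ _ _ _ (is_pseries_z_mul_PS_derive_C a z l Hl) (Hf z Hz))].
    intros n. unfold b. Cring. }
  pose proof (Cmod_pseries_coef_le b _ M Hb HM (S k)) as H.
  replace (b (S k)) with (RtoC (INR k) * a (S k))%C in H
    by (unfold b; rewrite S_INR, RtoC_plus; Cring).
  now rewrite Cmod_mult, Cmod_R, Rabs_pos_eq in H by apply pos_INR.
Qed.

(** * Starlikeness of the partial sums *)

Lemma Cmod_pseries_sub_linear_le (d : nat -> C) (z L : C) :
  Cmod z < 1 -> is_pseries d z L -> (forall k, Cmod (d (S (S k))) <= 1 / 2) ->
  Cmod (L - d 0%nat - d 1%nat * z)%C <= Cmod z ^ 2 / (2 * (1 - Cmod z)).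
Proof.
  intros Hz HL Hd. pose proof (Cmod_ge_0 z).
  assert (Htail : is_series (fun k => scal (pow_n z (2 + k)) (d (2 + k)%nat))
                            (L - d 0%nat - d 1%nat * z)%C).
  { apply (is_series_incr_n (K := C_AbsRing) (fun k => scal (pow_n z k) (d k)) 2); [lia|].
    match goal with |- is_series _ ?S => replace S with L; [exact HL|] end.
    simpl pred. rewrite sum_Sn, sum_O.
    change (pow_n z 0) with (RtoC 1). change (pow_n z 1) with (z * 1)%C. Cring. }
  replace (Cmod z ^ 2 / (2 * (1 - Cmod z))) with (Cmod z ^ 2 / 2 / (1 - Cmod z)) by (field; lra).
  apply (Cmod_series_le_geom _ _ _ _ Htail); [lra|]. intros k.
  change (Cmod (pow_n z (2 + k) * d (2 + k)%nat)%C <= Cmod z ^ 2 / 2 * Cmod z ^ k).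
  rewrite Cmod_mult, Cmod_pow_n, pow_add.
  pose proof (Hd k). pose proof (Cmod_ge_0 (d (2 + k)%nat)).
  assert (0 <= Cmod z ^ 2 * Cmod z ^ k) by (rewrite <- pow_add; apply pow_le; lra).
  simpl in *. nra.
Qed.

Lemma starlike_in_disk_mono (rho1 rho2 : R) (g : C -> C) :
  rho1 <= rho2 -> starlike_in_disk rho2 g -> starlike_in_disk rho1 g.
Proof.
  intros Hle [Hhol Hstar]. split.
  - intros z Hz. apply Hhol. unfold in_disk in *. lra.
  - intros z Hz0 Hz. apply Hstar; lra.
Qed.

Lemma Re_div_pos_of_Cmod_sub_le (z X Y : C) (m : R) :
  Cmod (X - z) <= m -> Cmod (Y - X) <= m -> 2 * m < Cmod z ->
  X <> RtoC 0 /\ 0 < Re (Y / X).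
Proof.
  intros HX HY Hm. pose proof (Cmod_ge_0 (X - z)%C) as Hm0.
  assert (HX_lb : Cmod z - m <= Cmod X).
  { assert (E : Cmod (z - X)%C = Cmod (X - z)%C) by (rewrite <- Cmod_opp; f_equal; Cring).
    pose proof (Cmod_triangle X (z - X)) as Htri.
    replace (X + (z - X))%C with z in Htri by Cring. lra. }
  assert (HX0 : X <> RtoC 0).
  { intros H0. rewrite H0, Cmod_0 in HX_lb. lra. }
  split; [exact HX0|].
  replace (Y / X)%C with (1 + (Y - X) / X)%C by (field; exact HX0).
  assert (Hw : Cmod ((Y - X) / X)%C < 1).
  { rewrite Cmod_div by exact HX0. apply (Rmult_lt_reg_r (Cmod X)); [lra|].
    unfold Rdiv. rewrite Rmult_assoc, Rinv_l, Rmult_1_r by lra. lra. }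
  pose proof (re_le_Cmod ((Y - X) / X)%C).
  pose proof (Rle_abs (- Re ((Y - X) / X)%C)). rewrite Rabs_Ropp in *.
  change (0 < Re (RtoC 1) + Re ((Y - X) / X)%C). rewrite re_RtoC. lra.
Qed.

Lemma starlike_of_coef_bound (c : nat -> C) (g : C -> C) :
  c 0%nat = RtoC 0 -> c 1%nat = RtoC 1 ->
  (forall w, Cmod w < 1 -> is_pseries c w (g w)) ->
  (forall k, INR k * Cmod (c (S k)) <= 1 / 2) ->
  starlike_in_disk (1 / 2) g.
Proof.
  intros Hc0 Hc1 Hg Hc. split.
  { intros z Hz. unfold in_disk in Hz.
    destruct (is_derive_pseries_C c g Hg z ltac:(lra)) as [l [_ Hd]]. now exists l. }
  intros z Hz0 Hz. assert (Hz1 : Cmod z < 1) by lra.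
  destruct (is_derive_pseries_C c g Hg z Hz1) as [l [Hl Hd]].
  set (rho := Cmod z) in *. set (m := rho ^ 2 / (2 * (1 - rho))).
  assert (Hgz : Cmod (g z - z)%C <= m).
  { replace (g z - z)%C with (g z - c 0%nat - c 1%nat * z)%C by (rewrite Hc0, Hc1; Cring).
    apply (Cmod_pseries_sub_linear_le c z (g z) Hz1 (Hg z Hz1)).
    intros k. specialize (Hc (S k)). rewrite S_INR in Hc.
    pose proof (pos_INR k). pose proof (Cmod_ge_0 (c (S (S k)))). nra. }
  assert (Hzg' : Cmod (z * l - g z)%C <= m).
  { set (d := fun k => (RtoC (INR k) * c k - c k)%C).
    replace (z * l - g z)%C with (z * l - g z - d 0%nat - d 1%nat * z)%C
      by (unfold d; rewrite Hc0, INR_0, INR_1; Cring).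
    apply (Cmod_pseries_sub_linear_le d z _ Hz1).
    - eapply is_series_ext; [|exact (is_series_minus _ _ _ _
        (is_pseries_z_mul_PS_derive_C c z l Hl) (Hg z Hz1))].
      intros k. unfold d. Cring.
    - intros k. unfold d.
      replace (RtoC (INR (S (S k))) * c (S (S k)) - c (S (S k)))%C
        with (RtoC (INR (S k)) * c (S (S k)))%C by (rewrite (S_INR (S k)), RtoC_plus; Cring).
      rewrite Cmod_mult, Cmod_R, Rabs_pos_eq by apply pos_INR. apply Hc. }
  assert (Hm : 2 * m < rho).
  { unfold m. apply (Rmult_lt_reg_r (1 - rho)); [lra|].
    replace (2 * (rho ^ 2 / (2 * (1 - rho))) * (1 - rho)) with (rho * rho) by (field; lra).
    nra. }
  destruct (Re_div_pos_of_Cmod_sub_le z (g z) (z * l) m Hgz Hzg' Hm) as [Hgz0 Hre].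
  split; [exact Hgz0|].
  intros g' Hg'.
  now rewrite <- (is_C_derive_unique _ _ _ Hg'), (is_C_derive_unique _ _ _ Hd).
Qed.

Lemma is_series_eventually_0 (d : nat -> C) (K : nat) :
  (forall k, (K < k)%nat -> d k = RtoC 0) -> is_series d (sum_n d K).
Proof.
  intros Hd. apply (filterlim_ext_loc (fun _ => sum_n d K)); [|apply filterlim_const].
  exists K. intros n Hn. induction n as [|n IH].
  - now assert (K = 0%nat) as -> by lia.
  - destruct (Nat.eq_dec K (S n)) as [->|Hne]; [reflexivity|].
    rewrite sum_Sn, <- IH, Hd by lia. symmetry. apply (plus_zero_r (G := C_AbelianGroup)).
Qed.

Definition PS_trunc (a : nat -> C) (n k : nat) : C := if (k <=? n)%nat then a k else RtoC 0.

Lemma is_pseries_partial_sum (a : nat -> C) (n : nat) (w : C) :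
  a 0%nat = RtoC 0 -> a 1%nat = RtoC 1 -> (2 <= n)%nat ->
  is_pseries (PS_trunc a n) w (partial_sum a n w).
Proof.
  intros Ha0 Ha1 Hn.
  assert (Htrunc : forall k, (k <= n)%nat -> PS_trunc a n k = a k).
  { intros k Hk. unfold PS_trunc. now rewrite (proj2 (Nat.leb_le k n) Hk). }
  replace (partial_sum a n w) with (sum_n (fun k => scal (pow_n w k) (PS_trunc a n k)) n).
  - apply is_series_eventually_0. intros k Hk. unfold PS_trunc.
    rewrite (proj2 (Nat.leb_gt k n) Hk). Cring.
  - unfold sum_n, partial_sum. rewrite (sum_Sn_m _ 0), (sum_Sn_m _ 1) by lia.
    rewrite !Htrunc, Ha0, Ha1 by lia.
    rewrite (sum_n_m_ext_loc _ (fun k => (a k * pow_n w k)%C)).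
    + change (pow_n w 0) with (RtoC 1). change (pow_n w 1) with (w * 1)%C. Cring.
    + intros k Hk. rewrite Htrunc by lia. Cring.
Qed.

(** * The radius r_{S*} *)

Lemma ln_1_minus_le (x : R) : 0 <= x < 1 ->
  ln (1 - x) <= - (x + x ^ 2 / 2 + x ^ 3 / 3 + x ^ 4 / 4).
Proof.
  intros [Hx0 Hx1].
  set (h := fun t => ln (1 - t) + (t + t ^ 2 / 2 + t ^ 3 / 3 + t ^ 4 / 4)).
  assert (Hh' : forall t, t < 1 -> is_derive h t (- t ^ 4 / (1 - t))).
  { intros t Ht. unfold h. auto_derive; [lra | field; lra]. }
  destruct (Req_dec x 0) as [->|Hx].
  { replace (1 - 0) with 1 by ring. rewrite ln_1. lra. }
  destruct (MVT_gen h 0 x (fun t => - t ^ 4 / (1 - t))) as [c [Hc Hmvt]].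
  - intros t Ht. apply Hh'. rewrite Rmax_right in Ht; lra.
  - intros t Ht. rewrite Rmax_right in Ht by lra.
    apply continuity_pt_filterlim, (ex_derive_continuous (K := R_AbsRing) (V := R_NormedModule)).
    eexists. apply Hh'. lra.
  - rewrite Rmin_left, Rmax_right in Hc by lra.
    assert (Hh0 : h 0 = 0).
    { unfold h. replace (1 - 0) with 1 by ring. rewrite ln_1. field. }
    assert (0 <= c ^ 4 / (1 - c)) by (apply Rdiv_le_0_compat; [apply pow_le|]; lra).
    assert (h x <= 0).
    { rewrite Hh0, Rminus_0_r in Hmvt. rewrite Hmvt. unfold Rdiv at 1. nra. }
    unfold h in *. lra.
Qed.

Lemma rS_equation_neg (r : R) : 1 / 2 <= r < 1 -> rS_equation r < 0.
Proof.
  intros Hr. unfold rS_equation.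
  assert (Hln : 3 * (1 - r) * (2 - r) * ln (1 - r)
             <= 3 * (1 - r) * (2 - r) * - (r + r ^ 2 / 2 + r ^ 3 / 3 + r ^ 4 / 4)).
  { apply Rmult_le_compat_l; [nra | apply ln_1_minus_le; lra]. }
  assert (Hpoly : forall u, 0 < u <= 1 / 2 ->
    -1 - 9/4*u + 35/4*u^2 + u^3 - 5*u^4 + 13/4*u^5 - 3/4*u^6 < 0).
  { intros u Hu.
    assert (H1 : 0 <= u * (1/2 - u)) by nra.
    assert (H2 : 0 <= u ^ 2 * (1/2 - u)) by (apply Rmult_le_pos; nra).
    assert (H3 : 0 <= u ^ 3 * (1/2 - u)) by (apply Rmult_le_pos; [apply pow_le|]; lra).
    assert (H4 : 0 <= u ^ 4 * (1/2 - u)) by (apply Rmult_le_pos; [apply pow_le|]; lra).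
    assert (H5 : 0 <= u ^ 5 * (1/2 - u)) by (apply Rmult_le_pos; [apply pow_le|]; lra).
    nra. }
  specialize (Hpoly (1 - r) ltac:(lra)).
  assert (E : 3 * (1 - r) * (2 - r) * - (r + r ^ 2 / 2 + r ^ 3 / 3 + r ^ 4 / 4)
              + 4 - 4 * r - 3 * r ^ 2 + 2 * r ^ 3
            = -1 - 9/4*(1-r) + 35/4*(1-r)^2 + (1-r)^3 - 5*(1-r)^4
              + 13/4*(1-r)^5 - 3/4*(1-r)^6) by field.
  lra.
Qed.

Lemma rS_root_lt_half (r : R) : 0 < r < 1 -> rS_equation r = 0 -> r < 1 / 2.
Proof.
  intros Hr Hroot. destruct (Rlt_le_dec r (1 / 2)) as [H|H]; [exact H|].
  pose proof (rS_equation_neg r (conj H (proj2 Hr))). lra.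
Qed.

Theorem theorem2p2 (a : nat -> C) (f f' phi : C -> C) :
  a 0%nat = 0%C -> a 1%nat = 1%C ->
  (* f(z) = z + sum_{k>=2} a_k z^k on the unit disk *)
  (forall z : C, Cmod z < 1 -> is_pseries a z (f z)) ->
  (* f' is the (complex) derivative of f on the unit disk *)
  (forall z : C, Cmod z < 1 -> is_derive f z (f' z)) ->
  (* phi analytic in the disk with |phi| <= 1 *)
  holomorphic_on_disk 1 phi ->
  (forall z : C, Cmod z < 1 -> Cmod (phi z) <= 1) ->
  (* z f'(z) - f(z) = 1/2 z^2 phi(z) *)
  (forall z : C, Cmod z < 1 ->
     (z * f' z - f z)%C = (/ 2 * (z * z) * phi z)%C) ->
  forall r : R, 0 < r < 1 -> rS_equation r = 0 ->
  forall n : nat, (2 <= n)%nat ->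
    starlike_in_disk r (partial_sum a n).
Proof.
  (* only the bound [|phi| <= 1] enters, through the coefficient estimate *)
  intros Ha0 Ha1 Hf Hf' _ Hphi Heq r Hr Hroot n Hn.
  assert (Hcoef : forall k, INR k * Cmod (a (S k)) <= 1 / 2).
  { apply (Cmod_pseries_coef_le_of_z_derive_sub a f f' _ Hf Hf').
    intros z Hz. rewrite Heq by exact Hz.
    rewrite !Cmod_mult, Cmod_inv, Cmod_R, Rabs_pos_eq by (lra || (injection; lra)).
    pose proof (Hphi z Hz). pose proof (Cmod_ge_0 z). pose proof (Cmod_ge_0 (phi z)).
    assert (Cmod z * Cmod z <= 1) by nra. nra. }
  apply (starlike_in_disk_mono r (1 / 2)); [apply Rlt_le, rS_root_lt_half; assumption|].
  apply (starlike_of_coef_bound (PS_trunc a n)).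
  - exact Ha0.
  - unfold PS_trunc. now rewrite (proj2 (Nat.leb_le 1 n) ltac:(lia)).
  - intros w _. now apply is_pseries_partial_sum.
  - intros k. unfold PS_trunc. destruct (S k <=? n)%nat; [apply Hcoef|].
    rewrite Cmod_0. lra.
Qed.
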